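(* Let $d\ge1$ and let $\mathcal{P}$ be a $d$-partition of $\mathbb{Z}^n$ that is invariant under the action of $\mathbb{Z}^n$. Then every block $S\in\mathcal{P}$ is either $d$-sparse or a non-trivial affine sublattice of $\mathbb{Z}^n$, i.e. $S=\mathbf v+L$ for some $\mathbf v\in\mathbb{Z}^n$ and some sublattice $L$ with $\{\mathbf 0\}\subsetneq L\subsetneq\mathbb{Z}^n$.
   Context: A $d$-partition of a set $E$ ($|E|\ge d+1$) is a collection $\mathcal P$ of subsets of $E$ (blocks) with $|\mathcal P|\ge2$, every block of size $\ge d$, and every $d$-element subset of $E$ contained in exactly one block. $\mathbb{Z}^n$ acts on subsets by $\mathbf u+S=\{\mathbf u+\mathbf v:\mathbf v\in S\}$ and on collections of subsets by $\mathbf u+\mathcal P=\{\mathbf u+S:S\in\mathcal P\}$; $\mathcal P$ is invariant if $\mathbf u+\mathcal P=\mathcal P$ for all $\mathbf u\in\mathbb{Z}^n$. A subset $S\subset\mathbb{Z}^n$ is $d$-sparse if there is no $\mathbf u\in\mathbb{Z}^n\setminus\{\mathbf 0\}$ with $|S\cap(\mathbf u+S)|\ge d$. *)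

From mathcomp Require Import all_boot all_order all_algebra.
Set Implicit Arguments. Unset Strict Implicit. Unset Printing Implicit Defensive.
Import GRing.Theory.
Local Open Scope ring_scope.

Notation point n := 'rV[int]_n.

Definition subset_of (n : nat) := point n -> Prop.

Definition card_ge (n : nat) (A : subset_of n) (k : nat) : Prop :=
  exists s : seq (point n), [/\ uniq s, size s = k & forall x, x \in s -> A x].

Definition translate (n : nat) (u : point n) (S : subset_of n) : subset_of n :=
  fun x => S (x - u).

Definition Zn_invariant (n : nat) (P : subset_of n -> Prop) : Prop :=
  forall u : point n, forall B : subset_of n,
    (exists S, P S /\ B = translate u S) <-> P B.

Definition d_partition (n d : nat) (P : subset_of n -> Prop) : Prop :=
  [/\ card_ge (fun _ : point n => True) d.+1,
      exists B1 B2, [/\ P B1, P B2 & B1 <> B2],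
      forall B, P B -> card_ge B d
    & forall s : seq (point n), uniq s -> size s = d ->
        exists B, [/\ P B, (forall x, x \in s -> B x) &
          forall B', P B' -> (forall x, x \in s -> B' x) -> B' = B]].

Definition d_sparse (n d : nat) (S : subset_of n) : Prop :=
  ~ exists u : point n, u != 0 /\ card_ge (fun x => S x /\ translate u S x) d.

Definition sublattice (n : nat) (L : subset_of n) : Prop :=
  [/\ L 0, (forall x y, L x -> L y -> L (x + y)) & forall x, L x -> L (- x)].

Definition nontrivial_affine_sublattice (n : nat) (S : subset_of n) : Prop :=
  exists (v : point n) (L : subset_of n),
    [/\ sublattice L, (exists x, L x /\ x != 0), (exists y, ~ L y)
      & forall x, S x <-> L (x - v)].

From mathcomp Require Import all_boot all_order all_algebra.
From Stdlib Require Import Classical.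
Set Implicit Arguments. Unset Strict Implicit. Unset Printing Implicit Defensive.
Import GRing.Theory Num.Theory.
Local Open Scope ring_scope.

(* For a block S of an invariant d-partition P, consider its
   group of periods  stab S = {x | S = x + S}, always a sublattice.  Two
   blocks sharing d points coincide and translates of blocks are blocks, so
   every block S is d-rigid: a translate w + S sharing d distinct points with
   S equals S.  For a d-rigid S:
   - if S is not d-sparse, some u <> 0 has |S /\ (u + S)| >= d, hence u is a
     period;
   - given a nonzero period u and points v, x of S, the d distinct points
     x + k u (k < d) lie in S and in (x - v) + S, so x - v is a period,
     i.e. S = v + stab S.
   The lattice stab S is proper because no block is all of Z^n: P has a
   second block, which holds d points of its own. *)

Lemma natmul_inj (R : numDomainType) (m n : nat) (u : 'M[R]_(m, n)) (i j : nat) :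
  u != 0 -> u *+ i = u *+ j -> i = j.
Proof.
move=> /eqP u_neq0 eq_ij.
have [[a b] uab_neq0] : exists k : 'I_m * 'I_n, u k.1 k.2 != 0.
  apply: NNPP => no_k; apply: u_neq0; apply/matrixP => a b; rewrite mxE.
  by apply: NNPP => uab; apply: no_k; exists (a, b); apply/eqP.
have := congr1 (fun M : 'M[R]_(m, n) => M a b) eq_ij; rewrite /= !mulmxnE.
exact: mulrIn.
Qed.

Definition stab (n : nat) (S : subset_of n) : subset_of n :=
  fun x => forall y, S y <-> S (y - x).

Section Periods.
Variables (n : nat) (S : subset_of n).

Lemma stab_sublattice : sublattice (stab S).
Proof.
split.
- by move=> y; rewrite subr0.
- move=> x y Sx Sy z; rewrite opprD addrA.
  by split=> [/(iffLR (Sx z))/(iffLR (Sy _))|/(iffRL (Sy _))/(iffRL (Sx z))].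
- move=> x Sx z; rewrite opprK.
  by have := Sx (z + x); rewrite addrK => e; exact: iff_sym e.
Qed.

Lemma stab_translate (x : point n) : translate x S = S -> stab S x.
Proof. by move=> eq_S y; rewrite -{1}eq_S. Qed.

Lemma stab_natmul (u : point n) (k : nat) : stab S u -> stab S (u *+ k).
Proof.
have [stab0 stabD _] := stab_sublattice.
by move=> Su; elim: k => [|k IH] //; rewrite mulrS; apply: stabD.
Qed.

Lemma stab_mem (v y : point n) : S v -> stab S (y - v) -> S y.
Proof. by move=> Sv /(_ y); rewrite opprB addrC subrK => /iffRL; apply. Qed.

Definition rigid (d : nat) : Prop :=
  forall (w : point n) (s : seq (point n)), uniq s -> size s = d ->
    (forall y, y \in s -> S y) -> (forall y, y \in s -> translate w S y) ->
    translate w S = S.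

Lemma rigid_nonsparse_period (d : nat) :
  rigid d -> ~ d_sparse d S -> exists2 u, u != 0 & stab S u.
Proof.
move=> rigidS /NNPP [u [u_neq0 [s [us ss sS]]]]; exists u => //.
apply: stab_translate; apply: (rigidS u s us ss).
- by move=> x /sS [].
- by move=> x /sS [].
Qed.

(* A d-rigid set with a nonzero period u is a single coset of its periods:
   for v, x in S, the d distinct points x + k u (k < d) lie in S and in
   (x - v) + S, so x - v is a period. *)
Lemma rigid_coset (d : nat) (u v x : point n) :
  rigid d -> u != 0 -> stab S u -> S v -> S x -> stab S (x - v).
Proof.
move=> rigidS u_neq0 Su Sv Sx; apply: stab_translate.
pose line := mkseq (fun k => x + u *+ k) d.
have on_line y : y \in line -> exists k, y = x + u *+ k.
  by move=> /mapP [k _ ->]; exists k.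
apply: (rigidS _ line).
- rewrite map_inj_uniq ?iota_uniq // => i j /addrI; exact: natmul_inj.
- by rewrite size_mkseq.
- by move=> y /on_line [k ->]; apply/(stab_natmul k Su); rewrite addrK.
- move=> y /on_line [k ->]; rewrite /translate opprB addrC addrA subrK.
  by apply/(stab_natmul k Su); rewrite addrK.
Qed.

End Periods.

Section Blocks.
Variables (n d : nat) (P : subset_of n -> Prop).
Hypotheses (dP : d_partition d P) (invP : Zn_invariant P).

Lemma block_unique (A B : subset_of n) (s : seq (point n)) :
  P A -> P B -> uniq s -> size s = d ->
  (forall x, x \in s -> A x) -> (forall x, x \in s -> B x) -> A = B.
Proof.
case: dP => _ _ _ cover PA PB us ss sA sB.
have [C [_ _ onlyC]] := cover s us ss.
by rewrite (onlyC A PA sA) (onlyC B PB sB).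
Qed.

Lemma block_translate (u : point n) (T : subset_of n) :
  P T -> P (translate u T).
Proof. by move=> PT; apply/(invP u); exists T. Qed.

Lemma block_rigid (S : subset_of n) : P S -> rigid S d.
Proof.
move=> PS w s us ss sS sT.
exact: (block_unique (block_translate w PS) PS us ss sT sS).
Qed.

(* No block is all of Z^n, since some other block has d points of its own. *)
Lemma block_proper (S : subset_of n) : P S -> exists y, ~ S y.
Proof.
move=> PS; apply: NNPP => full.
have allS y : S y by apply: NNPP => nSy; apply: full; exists y.
have [_ [B1 [B2 [PB1 PB2 B12]]] big _] := dP.
have [B [PB B_neq]] : exists B, P B /\ B <> S.
  have [eq1|] := classic (B1 = S); last by exists B1.
  by exists B2; split=> // eq2; apply: B12; rewrite eq1 eq2.
have [t [ut st tB]] := big B PB.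
exact/B_neq/(block_unique PB PS ut st tB).
Qed.

End Blocks.

Unset Implicit Arguments.

Theorem mainTheorem4 (n d : nat) (P : subset_of n -> Prop) :
  (1 <= d)%N -> d_partition d P -> Zn_invariant P ->
  forall S, P S -> d_sparse d S \/ nontrivial_affine_sublattice S.
Proof.
move=> d_gt0 dP invP S PS.
have [|nsparse] := classic (d_sparse d S); first by left.
right; have [u u_neq0 Su] := rigid_nonsparse_period (block_rigid dP invP PS) nsparse.
have [v Sv] : exists v, S v.
  have [_ _ big _] := dP; have [[|v s] [_ ss sS]] := big S PS.
    by rewrite -ss in d_gt0.
  by exists v; apply: sS; rewrite mem_head.
have [y nSy] := block_proper dP PS.
exists v, (stab S); split.
- exact: stab_sublattice.
- by exists u.
- by exists (y - v) => /(stab_mem Sv).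
- move=> x; split=> [Sx|]; last exact: stab_mem.
  exact: (rigid_coset (block_rigid dP invP PS) u_neq0 Su Sv Sx).
Qed.
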